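(* The zero-error capacity of a finite-state erasure channel with topological entropy $h_{ch}$ and maximal ratio $\tau$ satisfies $1-\tau-h_{ch}\le C_0\le 1-\tau$.
   Context: Logarithms are to base $q=|\mathcal{X}|\ge2$, $\mathcal{X}$ the finite input alphabet. Finite-state erasure channel: a strongly connected directed graph $\mathscr{G}=(\mathcal{S},\mathcal{E})$ with finite vertex set $\mathcal{S}$ and $\mathcal{E}\subseteq\mathcal{S}\times\mathcal{S}$, each edge labelled $\ell(e)\in\{0,1\}$, distinct edges leaving the same state having distinct labels. A noise word $v(0:n-1)$ is admissible from initial state $s_0$ if it is the label sequence of a walk of length $n$ starting at $s_0$; output $y(t)=x(t)$ if $v(t)=0$ and $y(t)=*$ (a symbol not in $\mathcal{X}$) if $v(t)=1$. The initial state is arbitrary and unknown. A zero-error code of length $n$ is a set $\mathcal{F}\subseteq\mathcal{X}^n$ such that no output word can be produced (for any initial states and admissible noise) by two distinct codewords; $C_0=\sup_n\sup_{\mathcal{F}}\log|\mathcal{F}|/n$. The adjacency matrix $\mathcal{A}$ has $\mathcal{A}_{s,s'}=1$ iff $(s,s')\in\mathcal{E}$, $\lambda$ is its Perron eigenvalue, $h_{ch}=\log\lambda$. The maximal ratio is $\tau=\max_i e_i/l_i$ over directed simple cycles ($e_i$ = number of edges labelled 1, $l_i$ = length). *)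

From Stdlib Require Import Reals.
From mathcomp Require Import all_boot.
Set Implicit Arguments. Unset Strict Implicit. Unset Printing Implicit Defensive.

Definition logb (q : nat) (x : R) : R := Rdiv (ln x) (ln (INR q)).

Section FSEC.
Variables (X S : finType) (E : rel S) (lab : S -> S -> bool).

Definition strongly_connected : Prop :=
  forall s s' : S, exists p : seq S, p <> [::] /\ path E s p /\ last s p = s'.

Definition distinct_labels : Prop :=
  forall s s1 s2 : S, E s s1 -> E s s2 -> lab s s1 = lab s s2 -> s1 = s2.

Definition adj (s s' : S) : R := if E s s' then R1 else R0.

(* lam is the Perron eigenvalue of the adjacency matrix: the (positive) eigenvalue
   admitting an entrywise positive eigenvector (unique by Perron--Frobenius). *)
Definition perron_eigenvalue (lam : R) : Prop :=
  Rlt 0 lam /\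
  exists v : S -> R, (forall s, Rlt 0 (v s)) /\
    forall s, \big[Rplus/R0]_(s' : S) Rmult (adj s s') (v s') = Rmult lam (v s).

Definition simple_cycle (c : seq S) : bool := [&& c != [::], cycle E c & uniq c].

Definition cycle_edges (c : seq S) : seq (S * S) := zip c (rot 1 c).

Definition cycle_ones (c : seq S) : nat := count (fun e => lab e.1 e.2) (cycle_edges c).
Definition cycle_ratio (c : seq S) : R := Rdiv (INR (cycle_ones c)) (INR (size c)).

Definition maximal_ratio (tau : R) : Prop :=
  (exists c, simple_cycle c /\ cycle_ratio c = tau) /\
  (forall c, simple_cycle c -> Rle (cycle_ratio c) tau).

Definition walk_labels (s0 : S) (p : seq S) : seq bool :=
  map (fun e => lab e.1 e.2) (zip (s0 :: p) p).

Definition admissible (s0 : S) (v : seq bool) : Prop :=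
  exists p : seq S, size p = size v /\ path E s0 p /\ walk_labels s0 p = v.

(* Channel output: None stands for the erasure symbol *. *)
Definition output (x : seq X) (v : seq bool) : seq (option X) :=
  map (fun xv => if xv.2 then None else Some xv.1) (zip x v).

Definition zero_error_code (n : nat) (F : {set n.-tuple X}) : Prop :=
  forall x1 x2 : n.-tuple X, x1 \in F -> x2 \in F -> x1 <> x2 ->
  forall (s1 s2 : S) (v1 v2 : n.-tuple bool),
    admissible s1 v1 -> admissible s2 v2 -> output x1 v1 <> output x2 v2.

Definition code_rates (r : R) : Prop :=
  exists (n : nat) (F : {set n.-tuple X}),
    (0 < n)%N /\ zero_error_code F /\ r = Rdiv (logb #|X| (INR #|F|)) (INR n).

Definition zero_error_capacity (C0 : R) : Prop := is_lub code_rates C0.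

End FSEC.

From Stdlib Require Import Reals Lra Lia.
From mathcomp Require Import all_boot zify Rstruct.
Set Implicit Arguments. Unset Strict Implicit. Unset Printing Implicit Defensive.

(* Upper bound: let c be a simple cycle of ratio tau.  Going round c for n steps
   from the best of its states erases at least n tau symbols, and the words of a
   zero-error code must differ off these erasures, so there are at most
   q^(n - n tau) of them.
   Lower bound: two words are confusable only if they share a noise word and
   agree off its erasures.  Noise words of length n come from at most
   W_n <= lam^n V / m walks (V the sum and m the minimum of a positive Perron
   eigenvector), and a walk of length n erases at most tau n + |S| symbols, since
   cutting out its simple cycles leaves a walk through distinct states.  Hence
   each word is confusable with at most W_n q^(tau n + |S|) words, a greedy
   choice yields a code of size about q^n / (lam^n q^(tau n)), and n -> oo gives
   the bound. *)

Lemma nuniq_split_cycle (T : eqType) (l : seq T) : ~~ uniq l ->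
  exists a y b d, l = a ++ y :: b ++ y :: d /\ uniq (y :: b).
Proof.
elim: l => [|x l IH] //=; rewrite negb_and negbK.
have [ul | /IH [a [y [b [d [-> ub]]]]]] := boolP (uniq l); last first.
  by move=> _; exists (x :: a), y, b, d.
rewrite orbF => xl; case/splitPr: xl ul => b d ul.
exists [::], x, b, d; split => //=.
rewrite cat_uniq /= negb_or in ul.
by case/and4P: ul => -> /andP [-> _].
Qed.

Lemma exists_ge_mean (a : nat -> nat) l : 0 < l ->
  exists j, \sum_(0 <= i < l) a i <= a j * l.
Proof.
case: l => // l _; case: (@arg_maxnP 'I_l.+1 ord0 xpredT (a \o val) isT) => j _ jmax.
exists j; rewrite big_mkord (@leq_trans (\sum_(i < l.+1) a j)) //.
  by apply: leq_sum => i _; exact: jmax.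
by rewrite sum_nat_const card_ord mulnC.
Qed.

Lemma sum_periodic_shift (f : nat -> nat) l t : (forall i, f (i + l) = f i) ->
  \sum_(0 <= j < l) f (j + t) = \sum_(0 <= j < l) f j.
Proof.
case: l => [|l] periodic; first by rewrite !big_geq.
elim: t => [|t IH]; first by under eq_bigr do rewrite addn0.
rewrite -IH big_nat_recr // big_nat_recl // add0n [RHS]addnC; congr (_ + _).
  by apply: eq_bigr => i _; rewrite addSnnS.
by rewrite addnC addSnnS periodic.
Qed.

Section IndependentSet.
Variables (T : finType) (r : T -> T -> Prop) (D : nat).
Hypothesis r_sym : forall x y, r x y -> r y x.
Hypothesis r_nbhd : forall x, exists N : {set T}, #|N| <= D /\ forall y, r x y -> y \in N.

Definition independent (F : {set T}) :=
  forall x y, x \in F -> y \in F -> x <> y -> ~ r x y.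

Lemma independent_subset_large (A : {set T}) :
  exists2 F : {set T}, F \subset A & independent F /\ #|A| <= #|F| * D.+1.
Proof.
have [k] := ubnP #|A|; elim: k A => // k IH A; rewrite ltnS => hA.
have [-> | [x xA]] := set_0Vmem A.
  by exists set0; rewrite ?sub0set ?cards0 //; split=> // y z; rewrite inE.
have [N [hN rN]] := r_nbhd x.
have hxN : 0 < #|A :&: (x |: N)| by apply/card_gt0P; exists x; rewrite !inE xA eqxx.
have hxN' : #|A :&: (x |: N)| <= D.+1.
  by rewrite (leq_trans (subset_leq_card (subsetIr _ _))) // cardsU1; case: (x \in N); lia.
have hsplit := cardsID (x |: N) A.
have [|F sF [indF hF]] := IH (A :\: (x |: N)); first lia.
have xF : x \notin F by apply/negP => /(subsetP sF); rewrite !inE eqxx.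
have notr y : y \in F -> ~ r x y.
  by move=> /(subsetP sF); rewrite !inE negb_or => /andP [/andP [_ /negP yN] _] /rN.
exists (x |: F); last split.
- by rewrite subUset sub1set xA (subset_trans sF) ?subsetDl.
- move=> y z; rewrite !inE => /predU1P [-> | yF] /predU1P [-> | zF] //.
  + by move=> _; apply: notr.
  + by move=> _ /r_sym; apply: notr.
  + exact: indF.
- by rewrite cardsU1 xF; lia.
Qed.

Lemma exists_independent_large : exists2 F : {set T}, independent F & #|T| <= #|F| * D.+1.
Proof.
have [F _ [indF hF]] := independent_subset_large setT.
by exists F; rewrite // -cardsT.
Qed.

End IndependentSet.

Section RealFacts.
Local Open Scope R_scope.

Lemma INR_sum (I : Type) (r : seq I) (P : pred I) (F : I -> nat) :
  INR (\sum_(i <- r | P i) F i) = \big[Rplus/R0]_(i <- r | P i) INR (F i).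
Proof. exact: (big_morph INR plus_INR). Qed.

Lemma INR_expn a k : INR (a ^ k) = pow (INR a) k.
Proof. by elim: k => [|k IH] //=; rewrite expnS mult_INR IH. Qed.

Lemma Rle_big (I : Type) (r : seq I) (P : pred I) (F G : I -> R) :
  (forall i, P i -> F i <= G i) ->
  \big[Rplus/R0]_(i <- r | P i) F i <= \big[Rplus/R0]_(i <- r | P i) G i.
Proof.
move=> hFG; apply: (big_ind2 Rle) => //; [exact: Rle_refl | exact: Rplus_le_compat].
Qed.

Lemma Rdiv_le_of_le_mul a b c : 0 < c -> a <= b * c -> a / c <= b.
Proof.
move=> hc hab; apply: (Rmult_le_reg_r c) => //.
by rewrite /Rdiv Rmult_assoc Rinv_l ?Rmult_1_r //; apply: Rgt_not_eq.
Qed.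

Lemma Rle_div_of_mul_le a b c : 0 < c -> a * c <= b -> a <= b / c.
Proof.
move=> hc hab; apply: (Rmult_le_reg_r c) => //.
by rewrite /Rdiv Rmult_assoc Rinv_l ?Rmult_1_r //; apply: Rgt_not_eq.
Qed.

Lemma le_of_forall_sub_div_le A B C :
  (forall n, (0 < n)%N -> A - B / INR n <= C) -> A <= C.
Proof.
move=> h; apply: Rnot_lt_le => CA.
have [N hN] := INR_archimed (A - C) (Rabs B) (Rgt_minus _ _ CA).
have N1_pos : 0 < INR N.+1 by apply: lt_0_INR; lia.
have := Rmult_le_compat_r _ _ _ (Rlt_le _ _ N1_pos) (h N.+1 isT).
have -> : (A - B / INR N.+1) * INR N.+1 = A * INR N.+1 - B by field; lra.
have := Rle_abs B; rewrite S_INR; lra.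
Qed.

Lemma exists_pos_lower_bound (T : finType) (f : T -> R) :
  (forall x, 0 < f x) -> exists2 m, 0 < m & forall x, m <= f x.
Proof.
move=> f_pos.
suff [m m_pos hm] : exists2 m, 0 < m & forall x, x \in enum T -> m <= f x.
  by exists m => // x; apply: hm; rewrite mem_enum.
elim: (enum T) => [|a r [m m_pos hm]]; first by exists 1; [lra | ].
exists (Rmin m (f a)); first exact: Rmin_pos.
move=> x; rewrite inE => /predU1P [-> | /hm]; first exact: Rmin_r.
exact: Rle_trans (Rmin_l _ _).
Qed.

End RealFacts.

Section Logb.
Local Open Scope R_scope.
Variable q : nat.
Hypothesis q_gt1 : (1 < q)%N.

Lemma ln_q_gt0 : 0 < ln (INR q).
Proof. by rewrite -ln_1; apply: ln_increasing; [lra | apply: lt_1_INR; apply/ltP]. Qed.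

Lemma logb_mul x y : 0 < x -> 0 < y -> logb q (x * y) = logb q x + logb q y.
Proof. by move=> hx hy; rewrite /logb ln_mult // Rdiv_plus_distr. Qed.

Lemma logb_pow x k : 0 < x -> logb q (x ^ k) = INR k * logb q x.
Proof. by move=> hx; rewrite /logb ln_pow // Rmult_div_assoc. Qed.

Lemma logb_base : logb q (INR q) = 1.
Proof. by rewrite /logb Rdiv_diag //; have := ln_q_gt0; lra. Qed.

Lemma logb_le x y : 0 < x -> x <= y -> logb q x <= logb q y.
Proof.
move=> hx [hxy | <-]; last exact: Rle_refl.
apply: Rmult_le_compat_r; first by have := Rinv_0_lt_compat _ ln_q_gt0; lra.
by apply: Rlt_le; apply: ln_increasing.
Qed.

(* The case [a = 0] relies on the junk value [ln 0 = 0]. *)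
Lemma logb_nat_le a k : (a <= q ^ k)%N -> logb q (INR a) <= INR k.
Proof.
case: a => [|a] ha.
  rewrite /logb /ln; case: Rlt_dec => [/Rlt_irrefl // | _].
  by rewrite Rdiv_0_l; apply: pos_INR.
have q_pos : 0 < INR q by apply: lt_0_INR; apply/ltP; lia.
rewrite -[INR k]Rmult_1_r -logb_base -logb_pow //.
by apply: logb_le; [apply: lt_0_INR; lia | rewrite -INR_expn; apply/le_INR/leP].
Qed.

End Logb.

Section Erasures.
Variables (S : finType) (E : rel S) (lab : S -> S -> bool).

Lemma walk_labelsE s p : walk_labels lab s p = pairmap lab s p.
Proof. by elim: p s => [|a p IH] s //=; rewrite -IH. Qed.

Definition erasures s p := count id (walk_labels lab s p).

Lemma erasures_le_size s p : erasures s p <= size p.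
Proof. by rewrite /erasures walk_labelsE -(size_pairmap lab s) count_size. Qed.

Lemma erasures_cat s p1 p2 :
  erasures s (p1 ++ p2) = erasures s p1 + erasures (last s p1) p2.
Proof. by rewrite /erasures !walk_labelsE pairmap_cat count_cat. Qed.

Lemma cycle_ones_erasures y b : cycle_ones lab (y :: b) = erasures y (rcons b y).
Proof.
rewrite /cycle_ones /cycle_edges rot1_cons /erasures /walk_labels count_map.
have -> : y :: rcons b y = (y :: b) ++ [:: y] by rewrite cat_cons cats1.
by rewrite -[X in _ = count _ (zip _ X)]cats0 zip_cat ?size_rcons //= cats0.
Qed.

Definition seq_erasures (l : seq S) := if l is x :: t then erasures x t else 0.

Lemma seq_erasures_cat_cons l1 y l2 :
  seq_erasures (l1 ++ y :: l2) = seq_erasures (rcons l1 y) + erasures y l2.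
Proof. by case: l1 => [|x l1] //=; rewrite -cat_rcons erasures_cat last_rcons. Qed.

Lemma seq_erasures_cut_cycle a y b d :
  seq_erasures (a ++ y :: b ++ y :: d) =
  seq_erasures (a ++ y :: d) + cycle_ones lab (y :: b).
Proof.
rewrite !seq_erasures_cat_cons -cat_rcons erasures_cat last_rcons.
by rewrite cycle_ones_erasures addnAC addnA.
Qed.

Lemma sorted_cut_cycle a y b d : sorted E (a ++ y :: b ++ y :: d) ->
  sorted E (a ++ y :: d) /\ cycle E (y :: b).
Proof.
rewrite !sorted_cat_cons -cat_rcons cat_path last_rcons.
by case/and3P => -> hcyc ->.
Qed.

End Erasures.

Section ErasureBound.
Variables (S : finType) (E : rel S) (lab : S -> S -> bool) (tau : R).
Local Open Scope R_scope.
Hypothesis tau_ge0 : 0 <= tau.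
Hypothesis tau_max : forall c, simple_cycle E c -> cycle_ratio lab c <= tau.

Lemma simple_cycle_ones_le c : simple_cycle E c ->
  INR (cycle_ones lab c) <= tau * INR (size c).
Proof.
move=> hc; have := tau_max hc; rewrite /cycle_ratio => hratio.
have hsize : 0 < INR (size c).
  by case/and3P: hc; case: (c) => // x p _ _ _; apply: lt_0_INR => /=; lia.
rewrite -[INR (cycle_ones _ _)](Rmult_div_l _ (INR (size c))); last lra.
by rewrite Rmult_div_swap; apply: Rmult_le_compat_r; lra.
Qed.

Lemma seq_erasures_cut_cycle_le a y b d :
  INR (seq_erasures lab (a ++ y :: d)) <= tau * INR (size (a ++ y :: d)).-1 + INR #|S| ->
  simple_cycle E (y :: b) ->
  INR (seq_erasures lab (a ++ y :: b ++ y :: d)) <=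
    tau * INR (size (a ++ y :: b ++ y :: d)).-1 + INR #|S|.
Proof.
move=> bound_cut /simple_cycle_ones_le bound_cycle.
have -> : (size (a ++ y :: b ++ y :: d)).-1 = ((size (a ++ y :: d)).-1 + size (y :: b))%N.
  by rewrite -!subn1 !size_cat /= size_cat /=; lia.
rewrite seq_erasures_cut_cycle !plus_INR; lra.
Qed.

Lemma seq_erasures_le l : sorted E l ->
  INR (seq_erasures lab l) <= tau * INR (size l).-1 + INR #|S|.
Proof.
have [k] := ubnP (size l); elim: k l => // k IH l; rewrite ltnS => hlk hl.
have [ul | nul] := boolP (uniq l).
  have hS : (seq_erasures lab l <= #|S|)%N.
    apply: (@leq_trans (size l)); last by rewrite -(card_uniqP ul) max_card.
    by case: l {hlk hl ul} => //= x p; rewrite leqW ?erasures_le_size.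
  have := pos_INR (size l).-1; move/leP/le_INR: hS; nra.
have [a [y [b [d [def_l ub]]]]] := nuniq_split_cycle nul.
move: hl hlk; rewrite def_l => /sorted_cut_cycle [hl hcyc] hlk.
have hsimple : simple_cycle E (y :: b) by apply/and3P.
have hk : (size (a ++ y :: d) < k)%N by move: hlk; rewrite !size_cat /= size_cat /=; lia.
exact: seq_erasures_cut_cycle_le (IH _ hk hl) hsimple.
Qed.

Lemma erasures_le s p : path E s p ->
  INR (erasures lab s p) <= tau * INR (size p) + INR #|S|.
Proof. exact: (@seq_erasures_le (s :: p)). Qed.

End ErasureBound.

Section Walks.
Variables (S : finType) (E : rel S).

Fixpoint walks n s : seq (seq S) :=
  if n is n'.+1 then
    [seq s' :: w | s' <- [seq s' <- index_enum S | E s s'], w <- walks n' s']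
  else [:: [::]].

Lemma mem_walks n s w : (w \in walks n s) = path E s w && (size w == n).
Proof.
elim: n s w => [|n IH] s [|a w] /=; rewrite ?inE ?andbF //.
  by apply/allpairsPdep => -[s' [w' []]].
apply/allpairsPdep/idP => [[s' [w' [hs' hw' [-> ->]]]] | /andP [/andP [hsa hw] hsz]].
  by move: hs'; rewrite mem_filter => /andP [-> _] /=; rewrite -IH.
by exists a, w; rewrite mem_filter hsa mem_index_enum IH hw.
Qed.

Lemma size_walksS n s : size (walks n.+1 s) = \sum_(s' | E s s') size (walks n s').
Proof. by rewrite /= size_allpairs_dep sumnE big_map big_filter. Qed.

Lemma size_walks_gt0 : (forall s, exists s', E s s') -> forall n s, 0 < size (walks n s).
Proof.
move=> hsucc; elim=> [|n IH] s //; have [s' hs'] := hsucc s.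
by rewrite size_walksS (bigD1 s') //= ltn_addr.
Qed.

Local Open Scope R_scope.
Variables (lam m : R) (v : S -> R).
Hypothesis v_eigen : forall s, \big[Rplus/R0]_(s' : S) (adj E s s' * v s') = lam * v s.
Hypothesis m_le_v : forall s, m <= v s.

Lemma size_walks_perron n s : INR (size (walks n s)) * m <= lam ^ n * v s.
Proof.
elim: n s => [|n IH] s; first by rewrite /= !Rmult_1_l.
rewrite size_walksS INR_sum big_distrl /= (Rmult_comm lam) Rmult_assoc -v_eigen big_distrr /=.
rewrite big_mkcond; apply: Rle_big => s' _; rewrite /adj.
by case: (E s s'); rewrite ?Rmult_1_l ?Rmult_0_l ?Rmult_0_r; [exact: IH | lra].
Qed.

End Walks.

Section Refill.
Variable X : finType.

Fixpoint erased_symbols (v : seq bool) (y : seq X) : seq X :=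
  match v, y with
  | b :: v', a :: y' => if b then a :: erased_symbols v' y' else erased_symbols v' y'
  | _, _ => [::]
  end.

Fixpoint refill (v : seq bool) (x z : seq X) : seq X :=
  match v, x with
  | b :: v', a :: x' =>
      if b then head a z :: refill v' x' (behead z) else a :: refill v' x' z
  | _, _ => [::]
  end.

Lemma size_erased_symbols v y : size (erased_symbols v y) <= count id v.
Proof. by elim: v y => [|[] v IH] [|a y] //=; rewrite ?ltnS ?add0n. Qed.

Lemma refill_erased_symbols v x y z : size x = size v -> size y = size v ->
  output x v = output y v -> refill v x (erased_symbols v y ++ z) = y.
Proof.
elim: v x y z => [|[] v IH] [|a x] [|c y] z //= [hx] [hy]; rewrite /output /=.
  by case=> eq_out; rewrite IH.
by case=> -> eq_out; rewrite IH.
Qed.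

Lemma output_noise_inj (x y : seq X) v1 v2 : output x v1 = output y v2 ->
  size x = size v1 -> size y = size v2 -> size v1 = size v2 -> v1 = v2.
Proof.
elim: v1 v2 x y => [|b1 v1 IH] [|b2 v2] [|a x] [|c y] //=.
rewrite /output /= => -[eq_head eq_out] [hx] [hy] [hv]; rewrite (IH v2 x y) //.
by move: eq_head; case: b1; case: b2.
Qed.

End Refill.

Section GreedyCode.
Variables (X S : finType) (E : rel S) (lab : S -> S -> bool) (n : nat) (d : X).

Definition confusable (x y : n.-tuple X) := exists s1 s2 (v1 v2 : n.-tuple bool),
  [/\ admissible E lab s1 v1, admissible E lab s2 v2 & output x v1 = output y v2].

Lemma independent_zero_error_code F :
  independent confusable F -> zero_error_code E lab F.
Proof.
move=> indF x1 x2 h1 h2 hne s1 s2 v1 v2 adm1 adm2 out12.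
by apply: (indF x1 x2) => //; exists s1, s2, v1, v2.
Qed.

Definition noise_words := [seq walk_labels lab s w | s <- index_enum S, w <- walks E n s].

Definition num_walks := \sum_(s : S) size (walks E n s).

Lemma size_noise_words : size noise_words = num_walks.
Proof. by rewrite size_allpairs_dep sumnE big_map. Qed.

Lemma admissible_noise_word s (v : n.-tuple bool) :
  admissible E lab s v -> tval v \in noise_words.
Proof.
case=> p [hp [path_p <-]]; apply: allpairs_f_dep; first exact: mem_index_enum.
by rewrite mem_walks path_p hp size_tuple eqxx.
Qed.

Definition max_erasures := \max_(v <- noise_words) count id v.

Definition candidates (x : n.-tuple X) : seq (n.-tuple X) :=
  [seq insubd x (refill v x (tval z))
  | v <- noise_words, z <- enum {: max_erasures.-tuple X}].

Lemma size_candidates x : size (candidates x) = num_walks * #|X| ^ max_erasures.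
Proof. by rewrite size_allpairs size_noise_words -cardE card_tuple. Qed.

Lemma confusable_candidate x y : confusable x y -> y \in candidates x.
Proof.
case=> s1 [s2 [v1 [v2 [_ adm2 out12]]]].
have ev : tval v1 = tval v2 by apply: (output_noise_inj out12); rewrite ?size_tuple.
rewrite {}ev in out12.
set e := erased_symbols v2 y.
have he : size e <= max_erasures.
  apply: leq_trans (size_erased_symbols _ _) _.
  exact: (@leq_bigmax_seq _ _ xpredT (count id) _ (admissible_noise_word adm2)).
have hz : size (e ++ nseq (max_erasures - size e) d) == max_erasures.
  by rewrite size_cat size_nseq subnKC.
have -> : y = insubd x (refill v2 x (Tuple hz)).
  by rewrite refill_erased_symbols ?size_tuple ?valKd.
by apply: allpairs_f; [exact: admissible_noise_word adm2 | rewrite mem_enum].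
Qed.

Lemma exists_zero_error_code : exists2 F : {set n.-tuple X}, zero_error_code E lab F &
  #|X| ^ n <= #|F| * (num_walks * #|X| ^ max_erasures).+1.
Proof.
have conf_sym x y : confusable x y -> confusable y x.
  by case=> s1 [s2 [v1 [v2 [a1 a2 out12]]]]; exists s2, s1, v2, v1.
have conf_nbhd x : exists N : {set n.-tuple X},
    #|N| <= num_walks * #|X| ^ max_erasures /\ forall y, confusable x y -> y \in N.
  exists [set y in candidates x]; split; last by move=> y /confusable_candidate; rewrite inE.
  by rewrite -(size_candidates x) cardsE card_size.
have [F indF hF] := exists_independent_large conf_sym conf_nbhd.
by exists F; [exact: independent_zero_error_code | rewrite card_tuple in hF].
Qed.

End GreedyCode.

Section CycleWalk.
Variables (S : finType) (E : rel S) (lab : S -> S -> bool) (c0 : S) (c' : seq S).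
Let c := c0 :: c'.
Let l := size c.

Definition cycle_state k := nth c0 c (k %% l).

Lemma cycle_state_edge : cycle E c -> forall k, E (cycle_state k) (cycle_state k.+1).
Proof.
move=> /(pathP c0) c_path k; have hk : k %% l < l by rewrite ltn_mod.
have -> : cycle_state k.+1 = nth c0 (rcons c' c0) (k %% l).
  rewrite /cycle_state -addn1 -modnDml nth_rcons_default /=.
  set i := k %% l in hk *; case: (ltnP i.+1 l) => hi; first by rewrite modn_small ?addn1.
  have -> : i + 1 = l by lia.
  by rewrite modnn [RHS]nth_default; last exact: hi.
by have := c_path (k %% l); rewrite size_rcons -rcons_cons nth_rcons hk; apply.
Qed.

Fixpoint cycle_walk j n :=
  if n is n'.+1 then cycle_state j.+1 :: cycle_walk j.+1 n' else [::].

Lemma size_cycle_walk j n : size (cycle_walk j n) = n.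
Proof. by elim: n j => [|n IH] j //=; rewrite IH. Qed.

Lemma path_cycle_walk : cycle E c -> forall j n, path E (cycle_state j) (cycle_walk j n).
Proof. by move=> c_cycle j n; elim: n j => [|n IH] j //=; rewrite cycle_state_edge ?IH. Qed.

Definition cycle_label k : nat := lab (cycle_state k) (cycle_state k.+1).

Lemma erasures_cycle_walk j n :
  erasures lab (cycle_state j) (cycle_walk j n) = \sum_(0 <= t < n) cycle_label (j + t).
Proof.
elim: n j => [|n IH] j; first by rewrite big_geq.
rewrite big_nat_recl // addn0 -[RHS]/(cycle_label j + _).
rewrite /erasures /= -/(erasures _ _ _) IH; congr (_ + _).
by apply: eq_bigr => t _; rewrite addSnnS.
Qed.

Lemma cycle_walk_full : cycle_walk 0 l = rcons c' c0.
Proof.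
apply: (@eq_from_nth _ c0); first by rewrite size_cycle_walk size_rcons.
move=> i; rewrite size_cycle_walk => hi.
have nth_walk j n t : t < n -> nth c0 (cycle_walk j n) t = cycle_state (j + t).+1.
  by elim: n j t => [|n IHn] j [|t] //= ht; rewrite ?addn0 // IHn // addSnnS.
rewrite nth_walk // add0n /cycle_state nth_rcons.
case: (ltnP i (size c')) => hic; first by rewrite modn_small.
have -> : i = size c' by move: hi; rewrite /l /=; lia.
by rewrite eqxx modnn.
Qed.

Lemma cycle_ones_sum : cycle_ones lab c = \sum_(0 <= t < l) cycle_label t.
Proof.
rewrite cycle_ones_erasures -cycle_walk_full.
by rewrite -[c0]/(cycle_state 0) erasures_cycle_walk.
Qed.

Lemma cycle_label_periodic i : cycle_label (i + l) = cycle_label i.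
Proof. by rewrite /cycle_label /cycle_state -addSn !modnDr. Qed.

(* Over the [l] starting states, every edge of [c] is traversed equally often. *)
Lemma sum_erasures_cycle_walk n :
  \sum_(0 <= j < l) erasures lab (cycle_state j) (cycle_walk j n) = n * cycle_ones lab c.
Proof.
under eq_bigr do rewrite erasures_cycle_walk.
rewrite exchange_big /= cycle_ones_sum.
under eq_bigr do rewrite (sum_periodic_shift _ cycle_label_periodic).
by rewrite sum_nat_const_nat subn0.
Qed.

Lemma exists_heavy_cycle_walk n :
  exists j, n * cycle_ones lab c <= erasures lab (cycle_state j) (cycle_walk j n) * l.
Proof.
pose e j := erasures lab (cycle_state j) (cycle_walk j n).
have [j hj] := exists_ge_mean e (isT : 0 < l).
by exists j; rewrite -sum_erasures_cycle_walk.
Qed.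

End CycleWalk.

Lemma output_tnth (X : finType) n (x : n.-tuple X) (v : n.-tuple bool) :
  output x v = [seq if tnth v i then None else Some (tnth x i) | i <- enum 'I_n].
Proof. by rewrite /output -{1}(map_tnth_enum x) -{1}(map_tnth_enum v) zip_map -map_comp. Qed.

Lemma code_card_le (X S : finType) (E : rel S) (lab : S -> S -> bool) n
    (F : {set n.-tuple X}) s (v : n.-tuple bool) :
  zero_error_code E lab F -> admissible E lab s v -> #|F| <= #|X| ^ (n - count id v).
Proof.
move=> hF adm; set I := [seq i <- enum 'I_n | ~~ tnth v i].
pose g (x : n.-tuple X) := map_tuple (tnth x) (in_tuple I).
have g_inj : {in F &, injective g}.
  move=> x1 x2 h1 h2 /(congr1 val) /= /eq_in_map eq_g.
  have [// | /eqP ne] := eqVneq x1 x2; exfalso.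
  apply: (hF x1 x2 h1 h2 ne s s v v adm adm); rewrite !output_tnth.
  apply/eq_in_map => i _; case: ifPn => // hi; congr Some.
  by apply: eq_g; rewrite mem_filter hi mem_enum.
rewrite -(card_in_imset g_inj) (leq_trans (max_card _)) // card_tuple size_filter.
have -> : count (fun i => ~~ tnth v i) (enum 'I_n) = count (predC id) v.
  by rewrite -[in RHS](map_tnth_enum v) count_map.
by rewrite -[X in X - _](size_tuple v) -(count_predC id v) addKn.
Qed.

Section UpperBound.
Local Open Scope R_scope.
Variables (X S : finType) (E : rel S) (lab : S -> S -> bool).
Hypothesis q_gt1 : (1 < #|X|)%N.

Lemma code_rate_le_cycle c n (F : {set n.-tuple X}) :
  cycle E c -> c != [::] -> (0 < n)%N -> zero_error_code E lab F ->
  logb #|X| (INR #|F|) / INR n <= 1 - cycle_ratio lab c.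
Proof.
case: c => [|c0 c'] // c_cycle _ n_gt0 hF.
set l := size (c0 :: c').
have [j heavy] := exists_heavy_cycle_walk lab c0 c' n.
set s := cycle_state c0 c' j; set p := cycle_walk c0 c' j n.
have size_v : size (walk_labels lab s p) == n.
  by rewrite walk_labelsE size_pairmap size_cycle_walk.
have adm : admissible E lab s (Tuple size_v).
  by exists p; rewrite size_cycle_walk size_tuple path_cycle_walk.
have hlog := logb_nat_le q_gt1 (code_card_le hF adm).
have e_le_n : (erasures lab s p <= n)%N.
  by have := erasures_le_size lab s p; rewrite size_cycle_walk.
have n_pos : 0 < INR n by apply: lt_0_INR; apply/ltP.
have l_pos : 0 < INR l by apply: lt_0_INR; apply/ltP.
have heavy_R : INR n * INR (cycle_ones lab (c0 :: c')) / INR l <= INR (erasures lab s p).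
  by apply: Rdiv_le_of_le_mul => //; rewrite -!mult_INR; apply/le_INR/leP.
apply: Rdiv_le_of_le_mul => //; apply: Rle_trans hlog _.
rewrite /= -/(erasures lab s p) minus_INR; last exact/leP.
rewrite /cycle_ratio -/l; move: heavy_R; rewrite /Rdiv; lra.
Qed.

End UpperBound.

Section LowerBound.
Local Open Scope R_scope.
Variables (X S : finType) (E : rel S) (lab : S -> S -> bool).
Hypothesis q_gt1 : (1 < #|X|)%N.
Hypothesis S_nonempty : (0 < #|S|)%N.
Hypothesis has_succ : forall s, exists s', E s s'.
Variables (tau lam m : R) (v : S -> R).
Hypothesis tau_ge0 : 0 <= tau.
Hypothesis tau_max : forall c, simple_cycle E c -> cycle_ratio lab c <= tau.
Hypothesis lam_gt0 : 0 < lam.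
Hypothesis v_eigen : forall s, \big[Rplus/R0]_(s' : S) (adj E s s' * v s') = lam * v s.
Hypothesis m_gt0 : 0 < m.
Hypothesis m_le_v : forall s, m <= v s.

Let V := \big[Rplus/R0]_(s : S) v s.
Let B := INR #|S| + logb #|X| 2 + logb #|X| V - logb #|X| m.

Lemma max_erasures_le n : INR (max_erasures E lab n) <= tau * INR n + INR #|S|.
Proof.
have bound_ge0 : 0 <= tau * INR n + INR #|S|.
  by have := pos_INR n; have := pos_INR #|S|; nra.
rewrite /max_erasures big_seq; apply: (big_ind (fun k => INR k <= _)) => //.
  by move=> a b ha hb; rewrite /maxn; case: ifP.
move=> w /allpairsPdep [s [p [_ walk_p ->]]].
move: walk_p; rewrite mem_walks => /andP [path_p /eqP <-].
exact (erasures_le tau_ge0 tau_max path_p).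
Qed.

Lemma num_walks_perron n : INR (num_walks E n) * m <= lam ^ n * V.
Proof.
rewrite /num_walks INR_sum big_distrl big_distrr /=.
by apply: Rle_big => s _; apply: size_walks_perron.
Qed.

Lemma num_walks_gt0 n : (0 < num_walks E n)%N.
Proof.
case/card_gt0P: S_nonempty => s _.
by rewrite /num_walks (bigD1 s) //= ltn_addr // size_walks_gt0.
Qed.

Lemma exists_large_code n : exists2 F : {set n.-tuple X}, zero_error_code E lab F &
  INR #|X| ^ n * m <= INR #|F| * (2 * INR #|X| ^ max_erasures E lab n * lam ^ n * V).
Proof.
case/card_gt0P: (ltnW q_gt1) => d _.
set K := max_erasures E lab n.
have [F hF card_F] := exists_zero_error_code E lab n d.
exists F => //.
have card_F2 : (#|X| ^ n <= #|F| * (2 * num_walks E n * #|X| ^ K))%N.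
  have pos : (0 < num_walks E n * #|X| ^ K)%N.
    by rewrite muln_gt0 num_walks_gt0 expn_gt0 ltnW.
  by apply: leq_trans card_F _; rewrite leq_mul2l -mulnA mul2n -addnn -addn1 leq_add2l pos orbT.
move/leP/le_INR: card_F2; rewrite !mult_INR !INR_expn => card_F2.
apply: Rle_trans (Rmult_le_compat_r _ _ _ (Rlt_le _ _ m_gt0) card_F2) _.
have coef_ge0 : 0 <= INR #|F| * 2 * INR #|X| ^ K.
  by apply: Rmult_le_pos; [have := pos_INR #|F|; lra | exact: pow_le (pos_INR #|X|)].
have := Rmult_le_compat_l _ _ _ coef_ge0 (num_walks_perron n).
rewrite [INR 2]/=; lra.
Qed.

Lemma V_gt0 : 0 < V.
Proof.
case/card_gt0P: S_nonempty => s _; rewrite /V (bigD1 s) //=.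
have : 0 <= \big[Rplus/R0]_(s' | s' != s) v s'.
  apply: big_ind => [|x y|s' _]; [exact: Rle_refl | exact: Rplus_le_le_0_compat |].
  exact: Rle_trans (Rlt_le _ _ m_gt0) (m_le_v s').
have := m_le_v s; lra.
Qed.

Lemma code_rate_ge n : (0 < n)%N -> exists2 F : {set n.-tuple X}, zero_error_code E lab F &
  1 - tau - logb #|X| lam - B / INR n <= logb #|X| (INR #|F|) / INR n.
Proof.
move=> n_gt0; have [F hF card_F] := exists_large_code n; exists F => //.
set K := max_erasures E lab n in card_F.
have q_pos : 0 < INR #|X| by apply: lt_0_INR; apply/ltP; lia.
have n_pos : 0 < INR n by apply: lt_0_INR; apply/ltP.
have qn_pos := pow_lt _ n q_pos; have qK_pos := pow_lt _ K q_pos.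
have lamn_pos := pow_lt _ n lam_gt0; have V_pos := V_gt0.
have lhs_pos : 0 < INR #|X| ^ n * m by apply: Rmult_lt_0_compat.
have coef_pos : 0 < 2 * INR #|X| ^ K * lam ^ n * V.
  by repeat apply: Rmult_lt_0_compat => //; lra.
have F_pos : 0 < INR #|F|.
  case: (posnP #|F|) => [F0 | ?]; last by apply: lt_0_INR; apply/ltP.
  by move: card_F; rewrite F0 Rmult_0_l; lra.
have hlog := logb_le q_gt1 lhs_pos card_F.
rewrite !logb_mul ?logb_pow ?logb_base // in hlog;
  try by repeat apply: Rmult_lt_0_compat => //; lra.
have K_le : INR K <= tau * INR n + INR #|S| := max_erasures_le n.
apply: Rle_div_of_mul_le => //.
have -> : (1 - tau - logb #|X| lam - B / INR n) * INR n = (1 - tau - logb #|X| lam) * INR n - B.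
  by field; lra.
rewrite /B; lra.
Qed.

End LowerBound.

Section Capacity.
Local Open Scope R_scope.

Lemma capacity_le (X S : finType) (E : rel S) (lab : S -> S -> bool) (tau C0 : R) :
  (1 < #|X|)%N -> maximal_ratio E lab tau -> zero_error_capacity X E lab C0 ->
  C0 <= 1 - tau.
Proof.
move=> q_gt1 [[c [c_simple <-]] _] hC0.
case/and3P: c_simple => c_ne c_cycle _.
apply: (proj2 hC0) => r [n [F [n_gt0 [hF ->]]]].
exact (code_rate_le_cycle q_gt1 c_cycle c_ne n_gt0 hF).
Qed.

Lemma capacity_ge (X S : finType) (E : rel S) (lab : S -> S -> bool) (lam tau C0 : R) :
  (1 < #|X|)%N -> strongly_connected E -> perron_eigenvalue E lam ->
  maximal_ratio E lab tau -> zero_error_capacity X E lab C0 ->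
  1 - tau - logb #|X| lam <= C0.
Proof.
move=> q_gt1 hsc [lam_gt0 [v [v_pos v_eigen]]] [[c [c_simple c_ratio]] tau_max] hC0.
case: c c_simple c_ratio => [|s0 c'] // c_simple c_ratio.
have tau_ge0 : 0 <= tau.
  rewrite -c_ratio; apply: Rmult_le_pos (pos_INR _) _.
  by apply/Rlt_le/Rinv_0_lt_compat/lt_0_INR => /=; lia.
have S_nonempty : (0 < #|S|)%N by apply/card_gt0P; exists s0.
have has_succ s : exists s', E s s'.
  by have [[|s' p] [// _ [/andP [hs _] _]]] := hsc s s; exists s'.
have [m m_gt0 m_le_v] := exists_pos_lower_bound v_pos.
apply: le_of_forall_sub_div_le => n n_gt0.
have [F hF rate] := code_rate_ge q_gt1 S_nonempty has_succ tau_ge0 tau_max lam_gt0 v_eigen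
  m_gt0 m_le_v n_gt0.
by apply: Rle_trans rate (proj1 hC0 _ _); exists n, F.
Qed.

End Capacity.

Theorem theorem4 (X S : finType) (E : rel S) (lab : S -> S -> bool)
  (hq : (1 < #|X|)%N)
  (hsc : strongly_connected E) (hlab : distinct_labels E lab)
  (lam tau C0 : R)
  (hlam : perron_eigenvalue E lam)
  (htau : maximal_ratio E lab tau)
  (hC0 : zero_error_capacity X E lab C0) :
  Rle (Rminus (Rminus R1 tau) (logb #|X| lam)) C0 /\ Rle C0 (Rminus R1 tau).
Proof.
split; first exact: capacity_ge hq hsc hlam htau hC0.
exact: capacity_le hq htau hC0.
Qed.
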